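(* For any polymatroid $\mathscr P$, $\mathrm{Box}_{\mathscr P}(\mathbf t)=\text{M\''ob}_{\mathscr P}(\mathbf t)$.
   Context: Notation: $[p]=\{1,\dots,p\}$; $\mathbf e_i$ is the $i$th standard basis vector; $\le$ on $\mathbb N^p$ is componentwise, $<$ its strict version; $\mathbf t^{\mathbf n}=t_1^{n_1}\cdots t_p^{n_p}$. Polymatroid: a finite set $\mathscr P\subseteq\mathbb N^p$ that is homogeneous (all elements have the same coordinate sum) and M-convex: for all $\mathbf u,\mathbf v\in\mathscr P$ and $i$ with $u_i>v_i$ there is $j$ with $u_j<v_j$ and $\mathbf u-\mathbf e_i+\mathbf e_j\in\mathscr P$. $I(\mathscr P)=\{\mathbf n\in\mathbb N^p:\mathbf n\le\mathbf u\text{ for some }\mathbf u\in\mathscr P\}$. Box polynomial: $\mathrm{Box}_{\mathscr P}(\mathbf t)=\sum_{\mathbf n\in I(\mathscr P)}\prod_{i=1}^p f_{n_i}(t_i)$, where $f_0(t)=1$ and $f_k(t)=t^k-t^{k-1}$ for $k\ge1$. M\''obius polynomial: $P$ is the poset on $I(\mathscr P)\sqcup\{\hat1\}$ (componentwise order on $I(\mathscr P)$, $\hat1$ a new maximum) with M\''obius function $\mu_P(\mathbf m,\mathbf m)=1$, $\mu_P(\mathbf m,\mathbf n)=-\sum_{\mathbf m\le\mathbf a<\mathbf n}\mu_P(\mathbf m,\mathbf a)$ for $\mathbf m<\mathbf n$, $0$ if $\mathbf m\not\le\mathbf n$. Set $\mu_{\mathscr P}(\mathbf n)=-\mu_P(\mathbf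 n,\hat1)$ and $\text{M\''ob}_{\mathscr P}(\mathbf t)=\sum_{\mathbf n\in I(\mathscr P)}\mu_{\mathscr P}(\mathbf n)\mathbf t^{\mathbf n}$. *)

From HB Require Import structures.
From mathcomp Require Import all_boot all_order all_algebra.
From mathcomp Require Import finmap.
From mathcomp Require Import mpoly.

Set Implicit Arguments.
Unset Strict Implicit.
Unset Printing Implicit Defensive.

Import GRing.Theory.
Local Open Scope ring_scope.
Local Open Scope fset_scope.

Section Polymatroid.
Variable p : nat.
Implicit Types (P : {fset 'X_{1..p}}) (m n u v : 'X_{1..p}).

Definition mle m n : bool := [forall i : 'I_p, (m i <= n i)%N].

Definition homogeneous P : Prop :=
  exists d : nat, forall u, u \in P -> mdeg u = d.

(* M-convexity; u - e_i + e_j written with multinomial operations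
   (u_i > v_i >= 0, so the truncated subtraction is exact) *)
Definition M_convex P : Prop :=
  forall u v, u \in P -> v \in P -> forall i : 'I_p, (v i < u i)%N ->
    exists j : 'I_p, (u j < v j)%N /\ ((u - U_(i)) + U_(j))%MM \in P.

Definition polymatroid P : Prop := homogeneous P /\ M_convex P.

Definition inI P n : bool := has (fun u => mle n u) P.

(* a degree bound: every element of I(P) has degree < Ibound P *)
Definition Ibound P : nat := (\sum_(u <- P) mdeg u).+1.

(* the finite type carrying I(P) (as a subset) and the extra top element
   (None = \hat 1) *)
Definition Pelt P := option 'X_{1..p < Ibound P}.

Definition inPoset P (x : Pelt P) : bool :=
  if x is Some n then inI P n else true.

Definition Ple P (x y : Pelt P) : bool :=
  match x, y with
  | _, None => true
  | None, Some _ => false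
  | Some a, Some b => mle a b
  end.

(* Moebius function by the recursion mu(m,m)=1,
   mu(m,n) = - sum_{m <= a < n} mu(m,a) for m < n, 0 if m not <= n;
   computed with fuel (the fuel #|Pelt P| exceeds the length of any chain). *)
Fixpoint mob_rec P (k : nat) (x y : Pelt P) : int :=
  if x == y then 1 else
  if Ple x y then
    match k with
    | 0 => 0
    | k'.+1 => - \sum_(a : Pelt P | [&& inPoset a, Ple x a, Ple a y & a != y])
                   mob_rec k' x a
    end
  else 0.

Definition mobius_poset P (x y : Pelt P) : int := mob_rec #|{: Pelt P}| x y.

Definition muP P (n : 'X_{1..p < Ibound P}) : int :=
  - mobius_poset (Some n) None.

Definition fk (k : nat) (t : {mpoly int[p]}) : {mpoly int[p]} :=
  if k is k'.+1 then t ^+ k - t ^+ k' else 1.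

Definition BoxPoly P : {mpoly int[p]} :=
  \sum_(n : 'X_{1..p < Ibound P} | inI P n) \prod_(i < p) fk (n i) 'X_i.

Definition MobPoly P : {mpoly int[p]} :=
  \sum_(n : 'X_{1..p < Ibound P} | inI P n) (muP n) *: 'X_[n].

End Polymatroid.

From HB Require Import structures.
From mathcomp Require Import all_boot all_order all_algebra.
From mathcomp Require Import finmap.
From mathcomp Require Import mpoly.
From mathcomp Require Import zify.

(* Expand both polynomials over the subsets S of coordinates (encoded as
   f : {ffun 'I_p -> bool}, with indicator multinomial e_S = mbits f).
   Since f_0 = 1 and f_k(t) = t^k - t^(k-1), the box polynomial is
   sum_{n in I(P)} sum_{S, e_S <= n} (-1)^|S| t^(n - e_S).  On the other side,
   I(P) is down-closed, so every interval [a, b] of the poset is a box of N^p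
   and its Moebius function is that of the product of chains N^p:
   mu(a, b) = (-1)^|S| if b = a + e_S and 0 otherwise.  Hence
   mu_P(n) = sum_{S, n + e_S in I(P)} (-1)^|S|, and the two expansions agree
   after the change of variables n -> n + e_S. *)

Set Implicit Arguments.
Unset Strict Implicit.
Unset Printing Implicit Defensive.

Import GRing.Theory.
Local Open Scope ring_scope.

Lemma big_option (R : Type) (idx : R) (op : Monoid.com_law idx) (T : finType)
    (Q : pred (option T)) (F : option T -> R) :
  \big[op/idx]_(x : option T | Q x) F x =
  op (if Q None then F None else idx) (\big[op/idx]_(t : T | Q (Some t)) F (Some t)).
Proof.
rewrite !big_mkcond {1}/index_enum [X in \big[_/_]_(_ <- X) _]unlock /=.
rewrite (_ : Finite.enum _ = None :: map Some (Finite.enum T)) //.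
rewrite unlock /=.
congr (op _ _); rewrite /index_enum unlock /=.
elim: (isFinite.enum_subdef _) => //= x s ->.
  by case: (Q (Some x)); rewrite ?Monoid.mul1m.
by rewrite [in LHS]unlock.
Qed.

Lemma prodr_if (R : comPzSemiRingType) (I : finType) (Q : pred I) (F : I -> R) :
  \prod_i (if Q i then F i else 0) = if [forall i, Q i] then \prod_i F i else 0.
Proof.
case: forallP => [QI | /forallP/forallPn [i Qi]]; first by apply: eq_bigr => i _; rewrite QI.
by rewrite (bigD1 i) //= (negPf Qi) mul0r.
Qed.

(* Bounds the fuel of [mob_rec] used in [mobius_poset]. *)
Lemma mdeg_le_card_bmnm (q B : nat) (m : 'X_{1..q < B}) :
  (mdeg m <= #|{: 'X_{1..q < B}}|)%N.
Proof.
case: q m => [|q] m; first by rewrite mdegE big_ord0.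
have deg_lt (k : 'I_B) : (mdeg (U_(@ord0 q) *+ k)%MM < B)%N.
  by rewrite mdegMn mdeg1 mul1n ltn_ord.
pose h (k : 'I_B) : 'X_{1..q.+1 < B} := BMultinom (deg_lt k).
have h_inj : injective h.
  move=> k1 k2 /(congr1 (fun x : 'X_{1..q.+1 < B} => mdeg (bmnm x))).
  by rewrite /= !mdegMn mdeg1 !mul1n => /val_inj.
apply: leq_trans (ltnW (bmdeg m)) _.
by rewrite -[X in (X <= _)%N](card_ord B); apply: leq_card h_inj.
Qed.

Section BoxMobius.
Variable p : nat.
Implicit Types (m n a b c : 'X_{1..p}) (f : {ffun 'I_p -> bool}).

Lemma mleE m n : mle m n = (m <= n)%MM.
Proof. by []. Qed.

Lemma lem_neq_ltn a b : (a <= b)%MM -> a != b -> exists i, (a i < b i)%N.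
Proof.
move=> /mnm_lepP le_ab ne_ab; apply/existsP; apply: contraNT ne_ab => /existsPn lt_n.
by apply/eqP/mnmP => i; apply/eqP; rewrite eqn_leq le_ab leqNgt lt_n.
Qed.

Lemma mdeg_lem a b : (a <= b)%MM -> (mdeg a <= mdeg b)%N.
Proof. by move=> /mnm_lepP le_ab; rewrite !mdegE leq_sum. Qed.

Lemma mdeg_ltm a b : (a <= b)%MM -> a != b -> (mdeg a < mdeg b)%N.
Proof.
move=> le_ab /(lem_neq_ltn le_ab) [i lt_i]; move/mnm_lepP: le_ab => le_ab.
rewrite !mdegE (bigD1 i) //= [X in (_ < X)%N](bigD1 i) //=.
by rewrite -addSn leq_add // leq_sum.
Qed.

Lemma sum_bmnm_eq (B : nat) (Q : pred 'X_{1..p}) x (s : int) :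
  \sum_(c : 'X_{1..p < B} | Q c) (if bmnm c == x then s else 0) =
  if Q x && (mdeg x < B)%N then s else 0.
Proof.
case: ifP => [/andP [Qx deg_x] | not_x].
  rewrite (bigD1 (BMultinom deg_x)) //= eqxx big1 ?addr0 // => c /andP [_ ne_c].
  by case: eqP => // ex; move: ne_c; rewrite bmeqP /= ex eqxx.
rewrite big1 // => c Qc; case: eqP => // ex.
by move: not_x; rewrite -ex Qc bmdeg.
Qed.

Lemma sum_bmnm_shift (V : nmodType) (B : nat) (Q : pred 'X_{1..p}) s (F : 'X_{1..p} -> V) :
  (forall n, Q (n + s)%MM -> (mdeg (n + s) < B)%N) ->
  \sum_(n : 'X_{1..p < B} | Q n && (s <= n)%MM) F (n - s)%MM =
  \sum_(n : 'X_{1..p < B} | Q (n + s)%MM) F n.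
Proof.
move=> deg_Q.
pose up (m : 'X_{1..p < B}) : 'X_{1..p < B} := insubd m (m + s)%MM.
pose down (m : 'X_{1..p < B}) : 'X_{1..p < B} := insubd m (m - s)%MM.
have downE (m : 'X_{1..p < B}) : bmnm (down m) = (m - s)%MM.
  by rewrite val_insubd (leq_ltn_trans (mdegB _ _) (bmdeg m)).
rewrite (reindex_onto up down) => [|n /andP [_ le_sn]]; last first.
  by apply: val_inj; rewrite val_insubd downE submK // bmdeg.
apply: eq_big => [m | m /andP [_ /eqP em]]; last by rewrite -downE em.
apply/idP/idP => [/andP [/andP [Q_up le_s_up] /eqP em] | Q_ms].
  by rewrite -{1}em downE submK.
have upE : bmnm (up m) = (m + s)%MM by rewrite val_insubd deg_Q.
by rewrite upE Q_ms lem_addl; apply/eqP/val_inj => /=; rewrite downE upE addmK.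
Qed.

Definition mbits f : 'X_{1..p} := [multinom nat_of_bool (f i) | i < p].

Definition sgnb f : int := \prod_i (if f i then -1 else 1).

Lemma mbits_eq0 f : (mbits f == 0%MM) = (f == [ffun => false]).
Proof.
apply/eqP/eqP => [/mnmP f0 | ->]; last by apply/mnmP => i; rewrite !mnmE ffunE.
by apply/ffunP => i; have := f0 i; rewrite !mnmE ffunE; case: (f i).
Qed.

Lemma sgnb0 : sgnb [ffun => false] = 1.
Proof. by rewrite /sgnb big1 // => i _; rewrite ffunE. Qed.

Lemma lem_addbits a b f : (a <= b)%MM ->
  (a + mbits f <= b)%MM = [forall i, f i ==> (a i < b i)%N].
Proof.
move=> /mnm_lepP le_ab; apply/mnm_lepP/forallP => [le_fb i | lt_fb i].
  by have := le_fb i; rewrite mnmDE mnmE; case: (f i); rewrite ?addn1.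
rewrite mnmDE mnmE; have := lt_fb i.
by case: (f i); rewrite ?addn1 ?addn0 //= => /implyP->.
Qed.

Lemma lem_bits f n : (mbits f <= n)%MM = [forall i, f i ==> (0 < n i)%N].
Proof. by apply/mnm_lepP/forallP => h i; have := h i; rewrite mnmE; case: (f i). Qed.

Lemma prod_sgnb_if f (Q : pred 'I_p) :
  \prod_i (if f i then (if Q i then -1 else 0) else 1) =
  if [forall i, f i ==> Q i] then sgnb f else 0 :> int.
Proof. by rewrite -prodr_if; apply: eq_bigr => i _; case: (f i); case: (Q i). Qed.

Lemma sum_sgnb_lem a b : (a <= b)%MM -> a != b ->
  \sum_f (if (a + mbits f <= b)%MM then sgnb f else 0) = 0.
Proof.
move=> le_ab ne_ab; have [i lt_i] := lem_neq_ltn le_ab ne_ab.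
under eq_bigr => f _ do rewrite lem_addbits // -prod_sgnb_if.
rewrite -(bigA_distr_bigA
  (fun j (x : bool) => if x then (if (a j < b j)%N then -1 else 0) else 1)).
by rewrite (bigD1 i) //= big_bool /= lt_i addNr mul0r.
Qed.

Lemma prod_fk_expand n :
  \prod_(i < p) fk (n i) 'X_i =
  \sum_f (if (mbits f <= n)%MM then sgnb f else 0) *: 'X_[n - mbits f] :> {mpoly int[p]}.
Proof.
pose F i (x : bool) : {mpoly int[p]} :=
  (if x then (if (0 < n i)%N then -1 else 0) else 1) *: 'X_i ^+ (n i - x).
have fk_sum i : fk (n i) 'X_i = \sum_x F i x.
  rewrite big_bool /F /=; case: (n i) => [|k] /=; first by rewrite scale0r add0r scale1r.
  by rewrite scaleN1r scale1r subn1 subn0 addrC.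
rewrite (eq_bigr _ (fun i _ => fk_sum i)) bigA_distr_bigA; apply: eq_bigr => f _.
rewrite scaler_prod prod_sgnb_if -lem_bits mpolyXE_id.
by congr (_ *: _); apply: eq_bigr => i _; rewrite mnmBE mnmE.
Qed.

Variable P : {fset 'X_{1..p}}.

Lemma inI_lem c b : (c <= b)%MM -> inI P b -> inI P c.
Proof.
by move=> le_cb /hasP [u uP le_bu]; apply/hasP; exists u => //; exact: lepm_trans le_bu.
Qed.

Lemma mdeg_inI m : inI P m -> (mdeg m < Ibound P)%N.
Proof.
move=> /hasP [u uP le_mu]; rewrite /Ibound ltnS.
by apply: leq_trans (mdeg_lem le_mu) _; rewrite (big_rem u) //= leq_addr.
Qed.

Local Notation T := 'X_{1..p < Ibound P}.

(* The Moebius function of the product of chains N^p. *)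
Definition mobius_box a b : int :=
  \sum_f (if b == (a + mbits f)%MM then sgnb f else 0).

Lemma mobius_box_refl a : mobius_box a a = 1.
Proof.
rewrite /mobius_box (bigD1 [ffun => false]) //= -{1}[a]addm0 eqm_add2l.
rewrite eq_sym mbits_eq0 eqxx sgnb0 big1 ?addr0 // => f f_ne0.
by rewrite -{1}[a]addm0 eqm_add2l eq_sym mbits_eq0 (negPf f_ne0).
Qed.

Lemma mobius_box_nlem a b : ~~ (a <= b)%MM -> mobius_box a b = 0.
Proof.
move=> nle_ab; rewrite /mobius_box big1 // => f _.
by case: eqP => // eb; move: nle_ab; rewrite eb lem_addr.
Qed.

Lemma sum_mobius_box_below (a b : T) : inI P b -> (a <= b)%MM -> bmnm a != b ->
  \sum_(c : T | [&& inI P c, (a <= c)%MM, (c <= b)%MM & bmnm c != b]) mobius_box a c =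
  - mobius_box a b.
Proof.
move=> Ib le_ab ne_ab.
rewrite -[RHS]add0r -[X in _ = X + _](sum_sgnb_lem le_ab ne_ab) -sumrB.
rewrite /mobius_box exchange_big /=; apply: eq_bigr => f _.
rewrite (sum_bmnm_eq _ (fun c => [&& inI P c, (a <= c)%MM, (c <= b)%MM & c != b])) lem_addr.
case: (eqVneq (a + mbits f)%MM b) => [-> | ne]; first by rewrite lepm_refl /= !andbF subrr.
rewrite /= andbT subr0; case: (boolP (a + mbits f <= b)%MM) => le_b; last by rewrite andbF.
by rewrite (inI_lem le_b Ib) (mdeg_inI (inI_lem le_b Ib)).
Qed.

Lemma mob_rec_box k (a b : T) : inI P b -> (mdeg b - mdeg a <= k)%N ->
  mob_rec k (Some a) (Some b) = mobius_box a b.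
Proof.
elim: k a b => [|k IH] a b Ib deg_k /=;
  (case: (eqVneq (Some a) (Some b)) => [[->] | ne_ab]; first by rewrite mobius_box_refl);
  (have {}ne_ab : bmnm a != b by apply: contraNneq ne_ab => /val_inj ->);
  (case: ifP => le_ab; last by rewrite mobius_box_nlem // -mleE le_ab).
  by have := mdeg_ltm le_ab ne_ab; lia.
rewrite big_option /= add0r -[RHS]opprK -sum_mobius_box_below //; congr (- _).
apply: eq_big => [c | c /and4P [Ic le_ac le_cb ne_cb]]; first by rewrite /= -bmeqP.
by apply: IH => //; have := mdeg_ltm le_cb ne_cb; lia.
Qed.

Lemma muP_box (n : T) :
  muP n = \sum_f (if inI P (n + mbits f)%MM then sgnb f else 0).
Proof.
rewrite /muP /mobius_poset card_option /= big_option /= add0r opprK.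
rewrite (eq_bigr (fun c : T => mobius_box n c)) => [|c /andP [Ic _]]; last first.
  by apply: mob_rec_box => //; have := mdeg_le_card_bmnm c; lia.
rewrite /mobius_box exchange_big /=; apply: eq_bigr => f _.
rewrite (sum_bmnm_eq _ (fun c => [&& inI P c, mle n c & true])) mleE lem_addr !andbT.
by case: (boolP (inI P _)) => // /mdeg_inI ->.
Qed.

End BoxMobius.

Theorem mainTheorem5 (p : nat) (P : {fset 'X_{1..p}}) :
  polymatroid P -> BoxPoly P = MobPoly P.
Proof.
(* Only the down-closedness of I(P) is used. *)
move=> _; rewrite /BoxPoly /MobPoly.
under eq_bigr do rewrite prod_fk_expand.
under [RHS]eq_bigr do rewrite muP_box scaler_suml.
rewrite exchange_big [RHS]exchange_big; apply: eq_bigr => f _ /=.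
under eq_bigr do rewrite (fun_if (fun c => c *: _)) scale0r.
under [RHS]eq_bigr do rewrite (fun_if (fun c => c *: _)) scale0r.
rewrite -!big_mkcondr /=.
rewrite (@sum_bmnm_shift p _ _ _ (mbits f) (fun m => sgnb f *: 'X_[m])); last first.
  by move=> n /mdeg_inI.
by apply: eq_bigl => n; rewrite andb_idl // => /(inI_lem (lem_addr _ _)).
Qed.
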